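(* Let $E$ be a Dedekind complete Riesz space with conditional expectation operator $T$, weak order unit $e$ with $Te=e$, and a filtration $(T_i)_{i\ge0}$ compatible with $T$. Let $(f_i)_{i\in\mathbb{N}}$ be a sequence in $E$ adapted to $(T_i)$ (i.e. $f_i\in\mathcal{R}(T_i)$) which is $e$-uniformly bounded, i.e. there is $B>0$ with $|f_i|\le Be$ for all $i$. Put $g_i:=f_i-T_{i-1}f_i$. Then $(g_i,T_i)$ is a martingale difference sequence (i.e. $g_i\in\mathcal{R}(T_i)$ and $T_ig_{i+1}=0$ for all $i$), and $$T\Big|\frac1n\sum_{i=1}^n g_i\Big|\to0\quad\text{(in order) as } n\to\infty.$$
   Context: A conditional expectation operator on a Dedekind complete Riesz space $E$ with a weak order unit is a positive, order continuous linear projection $T:E\to E$ which maps weak order units to weak order units and whose range $\mathcal{R}(T)$ is a Dedekind complete Riesz subspace of $E$. A filtration is a sequence $(T_i)$ of conditional expectations with $T_iT_j=T_i=T_jT_i$ for $i\le j$; it is compatible with $T$ if $T_iT=T=TT_i$ for all $i$. *)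

From HB Require Import structures.
From mathcomp Require Import all_boot all_order all_algebra.
From mathcomp Require Import reals.
Set Implicit Arguments. Unset Strict Implicit. Unset Printing Implicit Defensive.
Import Order.TTheory GRing.Theory Num.Theory.
Local Open Scope ring_scope.

Record riesz_space (R : realType) (E : lmodType R) : Type := RieszSpace {
  rle : E -> E -> Prop;
  rjoin : E -> E -> E;
  rle_refl : forall x, rle x x;
  rle_trans : forall x y z, rle x y -> rle y z -> rle x z;
  rle_anti : forall x y, rle x y -> rle y x -> x = y;
  rle_add : forall x y z, rle x y -> rle (x + z) (y + z);
  rle_scale : forall (a : R) x y, 0 <= a -> rle x y -> rle (a *: x) (a *: y);
  rjoin_ubl : forall x y, rle x (rjoin x y);
  rjoin_ubr : forall x y, rle y (rjoin x y);
  rjoin_least : forall x y z, rle x z -> rle y z -> rle (rjoin x y) z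
}.

Section Riesz.
Context {R : realType} {E : lmodType R} (L : riesz_space E).

Local Notation "x <=R y" := (rle L x y) (at level 70).

Definition rabs (x : E) : E := rjoin L x (- x).

Definition is_ub (S : E -> Prop) (u : E) := forall x, S x -> x <=R u.
Definition is_lb (S : E -> Prop) (u : E) := forall x, S x -> u <=R x.
Definition is_sup (S : E -> Prop) (s : E) :=
  is_ub S s /\ forall u, is_ub S u -> s <=R u.
Definition is_inf (S : E -> Prop) (s : E) :=
  is_lb S s /\ forall u, is_lb S u -> u <=R s.

Definition dedekind_complete :=
  forall S : E -> Prop, (exists x, S x) -> (exists u, is_ub S u) ->
  exists s, is_sup S s.

Definition ideal (P : E -> Prop) :=
  [/\ P 0, (forall x y, P x -> P y -> P (x + y)),
      (forall (a : R) x, P x -> P (a *: x)) &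
      (forall x y, P y -> rabs x <=R rabs y -> P x)].

Definition band (P : E -> Prop) :=
  ideal P /\
  forall (S : E -> Prop) s, (forall x, S x -> P x) -> is_sup S s -> P s.

Definition weak_order_unit (e : E) :=
  0 <=R e /\ forall x, forall P, band P -> P e -> P x.

Definition directed (A : Type) (leA : A -> A -> Prop) :=
  [/\ (exists a : A, True), (forall a, leA a a),
      (forall a b c, leA a b -> leA b c -> leA a c) &
      (forall a b, exists c, leA a c /\ leA b c)].

Definition decr_to0 (A : Type) (leA : A -> A -> Prop) (p : A -> E) :=
  (forall a b, leA a b -> p b <=R p a) /\
  is_inf (fun y => exists a, y = p a) 0.

Definition oconv (A : Type) (leA : A -> A -> Prop) (x : A -> E) (l : E) :=
  exists p : A -> E, decr_to0 leA p /\ forall a, rabs (x a - l) <=R p a.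

Definition seq_oconv (x : nat -> E) (l : E) :=
  oconv (fun m n : nat => (m <= n)%N) x l.

Definition order_continuous (T : E -> E) :=
  forall (A : Type) (leA : A -> A -> Prop), directed leA ->
  forall (x : A -> E) (l : E), oconv leA x l -> oconv leA (fun a => T (x a)) (T l).

Definition is_linear (T : E -> E) :=
  forall (a : R) x y, T (a *: x + y) = a *: T x + T y.

Definition positive_op (T : E -> E) := forall x, 0 <=R x -> 0 <=R T x.

Definition range (T : E -> E) (x : E) := exists y, T y = x.

Definition riesz_subspace (P : E -> Prop) :=
  [/\ P 0, (forall x y, P x -> P y -> P (x + y)),
      (forall (a : R) x, P x -> P (a *: x)) &
      (forall x y, P x -> P y -> P (rjoin L x y))].

Definition dedekind_complete_sub (P : E -> Prop) :=
  forall S : E -> Prop, (forall x, S x -> P x) -> (exists x, S x) ->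
  (exists u, P u /\ is_ub S u) ->
  exists s, [/\ P s, is_ub S s & forall u, P u -> is_ub S u -> s <=R u].

Definition cond_exp (T : E -> E) :=
  [/\ is_linear T, positive_op T, order_continuous T,
      (forall x, T (T x) = T x) &
      [/\ (forall u, weak_order_unit u -> weak_order_unit (T u)),
           riesz_subspace (range T) & dedekind_complete_sub (range T)]].

Definition filtration (Ti : nat -> E -> E) :=
  (forall i, cond_exp (Ti i)) /\
  forall i j, (i <= j)%N -> forall x, Ti i (Ti j x) = Ti i x /\ Ti j (Ti i x) = Ti i x.

Definition compatible (T : E -> E) (Ti : nat -> E -> E) :=
  forall i x, Ti i (T x) = T x /\ T (Ti i x) = T x.

End Riesz.

From HB Require Import structures.
From mathcomp Require Import all_boot all_order all_algebra.
From mathcomp Require Import reals.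
From mathcomp Require Import ring lra zify.
From Stdlib Require Import ClassicalEpsilon.
Set Implicit Arguments. Unset Strict Implicit. Unset Printing Implicit Defensive.
Import Order.TTheory GRing.Theory Num.Theory.
Local Open Scope ring_scope.

(* Write S_n = g_1 + ... + g_n. The heart of the proof is the second-moment estimate
   T Phi_K(S_n) <= n (1 + 4B)^2 e for the discretised square
   Phi_K(x) = sup_{|k| <= K} (2kx - k^2 e), whose growth 2K|x| <= Phi_K(x) + K^2 e
   turns it into T|S_n / n| <= ((1 + 4B)^2 / (2K) + K / (2n)) e; letting n, then K,
   grow gives order convergence to 0.
   For the increment, cut E by the band projections P_k onto the slabs where k e is
   the node nearest to S_n: there Phi_K(S_n + g) <= Phi_K(S_n) + 2k g + (1 + 4B)^2 e.
   The P_k are generated by elements of R(T_n), hence commute with T_n, so the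
   first-order term sum_k 2k P_k g_{n+1} is killed by T = T T_n as T_n g_{n+1} = 0. *)

(** * Lattice calculus *)

Definition rmeet {R : realType} {E : lmodType R} (L : riesz_space E) (x y : E) :=
  - rjoin L (- x) (- y).
Definition rpos {R : realType} {E : lmodType R} (L : riesz_space E) (x : E) :=
  rjoin L x 0.
Definition rneg {R : realType} {E : lmodType R} (L : riesz_space E) (x : E) :=
  rjoin L (- x) 0.

Lemma subr_eq_sub (V : zmodType) (x y x' y' : V) : x - y = x' - y' <-> x + y' = x' + y.
Proof.
split=> h; first by rewrite -[x](subrK y) h addrAC subrK.
by rewrite -[x](addrK y') h addrAC addrK.
Qed.

Lemma subr_insert (V : zmodType) (a c t u v : V) :
  a + c - v + u = (a - t) + (t + u - v + c).
Proof. by rewrite -!addrA addKr; congr (a + _); rewrite addrCA [RHS]addrCA [c + u]addrC. Qed.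

Section RieszLattice.
Context {R : realType} {E : lmodType R} {L : riesz_space E}.
Local Notation "x <=R y" := (rle L x y) (at level 70).

Lemma rle_addl x y z : x <=R y -> z + x <=R z + y.
Proof. by move=> h; rewrite ![z + _]addrC; apply: rle_add. Qed.

Lemma rle_add2 a b c d : a <=R b -> c <=R d -> a + c <=R b + d.
Proof. by move=> h1 h2; apply: rle_trans (rle_add _ h1) (rle_addl _ h2). Qed.

Lemma rsubr_ge0 x y : 0 <=R y - x <-> x <=R y.
Proof.
split=> h; first by have := rle_add x h; rewrite add0r subrK.
by have := rle_add (- x) h; rewrite subrr.
Qed.

Lemma rsubr_le0 x y : x - y <=R 0 <-> x <=R y.
Proof.
split=> h; first by have := rle_add y h; rewrite add0r subrK.
by have := rle_add (- y) h; rewrite subrr.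
Qed.

Lemma rleBrDr x y z : x <=R y - z <-> x + z <=R y.
Proof.
split=> h; first by have := rle_add z h; rewrite subrK.
by have := rle_add (- z) h; rewrite addrK.
Qed.

Lemma rleBlDr x y z : x - z <=R y <-> x <=R y + z.
Proof.
split=> h; first by have := rle_add z h; rewrite subrK.
by have := rle_add (- z) h; rewrite addrK.
Qed.

Lemma rle0_of_le_subr x y : x <=R x - y -> y <=R 0.
Proof.
by move=> h; have := rle_add (y - x) h; rewrite addrC subrK addrA subrK subrr.
Qed.

Lemma raddr_ge0 x y : 0 <=R x -> 0 <=R y -> 0 <=R x + y.
Proof. by move=> h1 h2; have := rle_add2 h1 h2; rewrite addr0. Qed.

Lemma rsumr_ge0 (I : Type) (r : seq I) (P : pred I) (F : I -> E) :
  (forall i, P i -> 0 <=R F i) -> 0 <=R \sum_(i <- r | P i) F i.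
Proof.
move=> h; elim: r => [|a r IH]; first by rewrite big_nil; apply: rle_refl.
by rewrite big_cons; case: ifP => // Pa; apply: raddr_ge0 => //; apply: h.
Qed.

Lemma rle_opp x y : x <=R y -> - y <=R - x.
Proof. by move=> /rsubr_ge0 h; apply/rsubr_ge0; rewrite opprK addrC. Qed.

Lemma roppr_ge0 x : 0 <=R - x <-> x <=R 0.
Proof. by split=> /rle_opp; rewrite ?opprK oppr0. Qed.

Lemma roppr_le0 x : - x <=R 0 <-> 0 <=R x.
Proof. by split=> /rle_opp; rewrite ?opprK oppr0. Qed.

Lemma rscaler_ge0 (a : R) x : 0 <= a -> 0 <=R x -> 0 <=R a *: x.
Proof. by move=> ha hx; have := rle_scale ha hx; rewrite scaler0. Qed.

Lemma rle_scalel (a b : R) x : a <= b -> 0 <=R x -> a *: x <=R b *: x.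
Proof.
move=> hab hx; apply/rsubr_ge0; rewrite -scalerBl.
by apply: rscaler_ge0; rewrite ?subr_ge0.
Qed.

Lemma rjoinC x y : rjoin L x y = rjoin L y x.
Proof. by apply: rle_anti; apply: rjoin_least; apply: rjoin_ubl || apply: rjoin_ubr. Qed.

Lemma rle_join x y x' y' : x <=R x' -> y <=R y' -> rjoin L x y <=R rjoin L x' y'.
Proof.
move=> h1 h2; apply: rjoin_least.
  exact: rle_trans h1 (rjoin_ubl L _ _).
exact: rle_trans h2 (rjoin_ubr L _ _).
Qed.

Lemma rjoin_idr x y : x <=R y -> rjoin L x y = y.
Proof.
by move=> h; apply: rle_anti; [apply: rjoin_least => //; apply: rle_refl|apply: rjoin_ubr].
Qed.

Lemma rjoin_addr x y z : rjoin L (x + z) (y + z) = rjoin L x y + z.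
Proof.
apply: rle_anti.
  by apply: rjoin_least; apply: rle_add; [apply: rjoin_ubl|apply: rjoin_ubr].
by apply/rleBrDr; apply: rjoin_least; apply/rleBrDr; [apply: rjoin_ubl|apply: rjoin_ubr].
Qed.

Lemma rjoin_scale (a : R) x y : 0 <= a -> rjoin L (a *: x) (a *: y) = a *: rjoin L x y.
Proof.
move=> ha; have [->|a0] := eqVneq a 0.
  by rewrite !scale0r; apply: rle_anti; [apply: rjoin_least; apply: rle_refl|apply: rjoin_ubl].
apply: rle_anti.
  by apply: rjoin_least; apply: rle_scale => //; [apply: rjoin_ubl|apply: rjoin_ubr].
have scaleK z : z = a^-1 *: (a *: z) by rewrite scalerA mulVf // scale1r.
have ha' : 0 <= a^-1 by rewrite invr_ge0.
have h : rjoin L x y <=R a^-1 *: rjoin L (a *: x) (a *: y).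
  by apply: rjoin_least; rewrite [X in X <=R _]scaleK;
    apply: rle_scale => //; [apply: rjoin_ubl|apply: rjoin_ubr].
by have := rle_scale ha h; rewrite scalerA mulfV // scale1r.
Qed.

Lemma rmeet_lel x y : rmeet L x y <=R x.
Proof. by rewrite /rmeet -[X in _ <=R X]opprK; apply: rle_opp; apply: rjoin_ubl. Qed.

Lemma rmeet_ler x y : rmeet L x y <=R y.
Proof. by rewrite /rmeet -[X in _ <=R X]opprK; apply: rle_opp; apply: rjoin_ubr. Qed.

Lemma rmeet_greatest x y z : z <=R x -> z <=R y -> z <=R rmeet L x y.
Proof.
by move=> h1 h2; rewrite /rmeet -[z]opprK; apply: rle_opp; apply: rjoin_least; apply: rle_opp.
Qed.

Lemma rmeetC x y : rmeet L x y = rmeet L y x.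
Proof. by rewrite /rmeet rjoinC. Qed.

Lemma rle_meet x y x' y' : x <=R x' -> y <=R y' -> rmeet L x y <=R rmeet L x' y'.
Proof.
move=> h1 h2; apply: rmeet_greatest.
  exact: rle_trans (rmeet_lel _ _) h1.
exact: rle_trans (rmeet_ler _ _) h2.
Qed.

Lemma rmeet_idl x y : x <=R y -> rmeet L x y = x.
Proof.
by move=> h; apply: rle_anti; [apply: rmeet_lel|apply: rmeet_greatest => //; apply: rle_refl].
Qed.

Lemma rmeet_addr x y z : rmeet L (x + z) (y + z) = rmeet L x y + z.
Proof. by rewrite /rmeet !opprD rjoin_addr opprD opprK. Qed.

Lemma rmeet_scale (a : R) x y : 0 <= a -> rmeet L (a *: x) (a *: y) = a *: rmeet L x y.
Proof. by move=> ha; rewrite /rmeet -!scalerN rjoin_scale // scalerN. Qed.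

Lemma rmeet_ge0 x y : 0 <=R x -> 0 <=R y -> 0 <=R rmeet L x y.
Proof. exact: rmeet_greatest. Qed.

Lemma rmeet_subadd a b c : 0 <=R a -> 0 <=R b -> 0 <=R c ->
  rmeet L (a + b) c <=R rmeet L a c + rmeet L b c.
Proof.
move=> ha hb hc; have hac : 0 <=R rmeet L a c by apply: rmeet_ge0.
have -> : rmeet L a c + rmeet L b c = rmeet L (rmeet L a c + b) (rmeet L a c + c).
  by rewrite ![rmeet L a c + _]addrC rmeet_addr addrC.
apply: rmeet_greatest; last first.
  by apply: rle_trans (rmeet_ler _ _) _; have := rle_add c hac; rewrite add0r.
apply: rle_trans (_ : _ <=R rmeet L (a + b) (c + b)) _.
  by apply: rle_meet; [apply: rle_refl|have := rle_addl c hb; rewrite addr0].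
by rewrite rmeet_addr addrC; apply: rle_refl.
Qed.

Lemma rjoin_add_meet x y : rjoin L x y + rmeet L x y = x + y.
Proof.
rewrite /rmeet; apply/eqP; rewrite subr_eq; apply/eqP.
have := rjoin_addr (- x) (- y) (x + y).
by rewrite addKr [- y + _]addrC addrK rjoinC addrC => ->.
Qed.

Lemma rpos_ge0 x : 0 <=R rpos L x. Proof. exact: rjoin_ubr. Qed.

Lemma rneg_ge0 x : 0 <=R rneg L x. Proof. exact: rjoin_ubr. Qed.

Lemma rpos_sub_neg x : rpos L x - rneg L x = x.
Proof.
have := rjoin_add_meet x 0; rewrite addr0 /rmeet oppr0 => h.
by rewrite /rpos /rneg -[X in _ = X]h.
Qed.

Lemma rmeet_pos_neg x : rmeet L (rpos L x) (rneg L x) = 0.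
Proof.
have := rmeet_addr (rpos L x) (rneg L x) (- rneg L x); rewrite rpos_sub_neg subrr.
have -> : rmeet L x 0 = - rneg L x by rewrite /rmeet oppr0.
by move/(congr1 (fun v => v + rneg L x)); rewrite subrK addNr => <-.
Qed.

Lemma rposN x : rpos L (- x) = rneg L x. Proof. by []. Qed.

Lemma rnegN x : rneg L (- x) = rpos L x. Proof. by rewrite /rneg opprK. Qed.

Lemma rabs_ge x : x <=R rabs L x. Proof. exact: rjoin_ubl. Qed.

Lemma rabs_geN x : - x <=R rabs L x. Proof. exact: rjoin_ubr. Qed.

Lemma rabs_le x z : x <=R z -> - x <=R z -> rabs L x <=R z. Proof. exact: rjoin_least. Qed.

Lemma rabs_ge0 x : 0 <=R rabs L x.
Proof.
have h2 : 0 < 2 :> R by [].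
have -> : rabs L x = 2^-1 *: (rabs L x + rabs L x).
  by rewrite -[X in X + _]scale1r -[X in _ + X]scale1r -scalerDl scalerA mulVf ?scale1r ?gt_eqF.
apply: rscaler_ge0; first by rewrite invr_ge0 ltW.
by rewrite -(subrr x) addrC; apply: rle_add2; [apply: rabs_geN|apply: rabs_ge].
Qed.

Lemma rabsN x : rabs L (- x) = rabs L x. Proof. by rewrite /rabs opprK rjoinC. Qed.

Lemma rabs_id x : 0 <=R x -> rabs L x = x.
Proof.
move=> h; rewrite /rabs rjoinC rjoin_idr //.
exact: rle_trans (proj2 (roppr_le0 x) h) h.
Qed.

Lemma rabsD x y : rabs L (x + y) <=R rabs L x + rabs L y.
Proof.
apply: rabs_le; first by apply: rle_add2; apply: rabs_ge.
by rewrite opprD; apply: rle_add2; apply: rabs_geN.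
Qed.

Lemma rabsZ (a : R) x : 0 <= a -> rabs L (a *: x) = a *: rabs L x.
Proof. by move=> ha; rewrite /rabs -scalerN rjoin_scale. Qed.

Lemma rabs_le0 x : rabs L x <=R 0 -> x = 0.
Proof.
move=> h; apply: rle_anti; first exact: rle_trans (rabs_ge x) h.
by apply/roppr_le0; apply: rle_trans (rabs_geN x) h.
Qed.

Lemma rpos_le_abs x : rpos L x <=R rabs L x.
Proof. by apply: rjoin_least; [apply: rabs_ge|apply: rabs_ge0]. Qed.

Lemma rneg_le_abs x : rneg L x <=R rabs L x.
Proof. by apply: rjoin_least; [apply: rabs_geN|apply: rabs_ge0]. Qed.

Lemma rabs_le_bounds x u : rabs L x <=R u -> - u <=R x /\ x <=R u.
Proof.
move=> h; split; last exact: rle_trans (rabs_ge x) h.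
by rewrite -[x]opprK; apply: rle_opp; apply: rle_trans (rabs_geN x) h.
Qed.

Lemma rscale_le_abs (c : R) x : c *: x <=R `|c| *: rabs L x.
Proof.
have [hc|hc] := lerP 0 c.
  by rewrite ger0_norm //; apply: rle_scale => //; apply: rabs_ge.
rewrite ltr0_norm //.
have -> : c *: x = (- c) *: (- x) by rewrite scaleNr scalerN opprK.
by apply: rle_scale; [rewrite oppr_ge0 ltW|apply: rabs_geN].
Qed.

End RieszLattice.

(** * Dedekind completeness and order convergence *)

Lemma leq_directed : directed (fun m n : nat => (m <= n)%N).
Proof.
split; [by exists 0%N | by [] | by move=> a b c; apply: leq_trans |].
by move=> a b; exists (maxn a b); rewrite leq_maxl leq_maxr.
Qed.

(* A supremum of [S] when one exists; an arbitrary value otherwise. *)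
Definition rsup {R : realType} {E : lmodType R} (L : riesz_space E) (S : E -> Prop) : E :=
  epsilon (inhabits 0) (is_sup L S).

Section DedekindComplete.
Context {R : realType} {E : lmodType R} (L : riesz_space E) (HD : dedekind_complete L).
Local Notation "x <=R y" := (rle L x y) (at level 70).

Lemma rsupP S : (exists x, S x) -> (exists u, is_ub L S u) -> is_sup L S (rsup L S).
Proof. by move=> h1 h2; apply: epsilon_spec; apply: HD. Qed.

(* The multiples n u are bounded by e, and their supremum s satisfies s + u <= s. *)
Lemma dedekind_archimedean e u :
  0 <=R e -> (forall eps : R, 0 < eps -> u <=R eps *: e) -> u <=R 0.
Proof.
move=> he hu; pose S y := exists n : nat, y = n%:R *: u.
have [s [s_ub s_least]] : exists s, is_sup L S s.
  apply: HD; first by exists 0, 0%N; rewrite scale0r.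
  exists e => _ [[|n] ->]; first by rewrite scale0r.
  have hn : 0 < n.+1%:R :> R by rewrite ltr0n.
  have hn' : 0 < n.+1%:R^-1 :> R by rewrite invr_gt0.
  have := rle_scale (ltW hn) (hu _ hn').
  by rewrite scalerA mulfV ?scale1r // gt_eqF.
apply: (@rle0_of_le_subr _ _ _ s); apply: s_least => _ [n ->].
by apply/rleBrDr; rewrite -[X in _ + X]scale1r -scalerDl natr1; apply: s_ub; exists n.+1.
Qed.

Lemma seq_oconv_sup (x : nat -> E) s :
  (forall n m, (n <= m)%N -> x n <=R x m) ->
  is_sup L (fun y => exists n, y = x n) s -> seq_oconv L x s.
Proof.
move=> x_homo [s_ub s_least]; exists (fun n => s - x n); split; first split.
- by move=> a b hab; apply: rle_addl; apply: rle_opp; apply: x_homo.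
- split=> [_ [n ->]|u u_lb]; first by apply/rsubr_ge0; apply: s_ub; exists n.
  apply: (@rle0_of_le_subr _ _ _ s); apply: s_least => _ [n ->].
  by apply/rleBrDr; rewrite addrC; apply/rleBrDr; apply: u_lb; exists n.
- move=> n; rewrite -rabsN opprB rabs_id; first exact: rle_refl.
  by apply/rsubr_ge0; apply: s_ub; exists n.
Qed.

Lemma decr_to0_add_le0 (p q : nat -> E) u :
  decr_to0 L (fun m n : nat => (m <= n)%N) p ->
  decr_to0 L (fun m n : nat => (m <= n)%N) q ->
  (forall n, u <=R p n + q n) -> u <=R 0.
Proof.
move=> [p_decr [_ p_inf]] [q_decr [_ q_inf]] hu.
have h m : u - q m <=R 0.
  apply: p_inf => _ [n ->]; apply/rleBlDr.
  apply: rle_trans (hu (maxn n m)) _.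
  by apply: rle_add2; [apply: p_decr|apply: q_decr]; rewrite ?leq_maxl ?leq_maxr.
by apply: q_inf => _ [m ->]; have := proj1 (rleBlDr _ _ _) (h m); rewrite add0r.
Qed.

Lemma seq_oconv_uniq (x y : nat -> E) a b : (forall n, x n = y n) ->
  seq_oconv L x a -> seq_oconv L y b -> a = b.
Proof.
move=> exy [p [p_decr hp]] [q [q_decr hq]].
suff /rabs_le0 /eqP : rabs L (a - b) <=R 0 by rewrite subr_eq0 => /eqP.
apply: (decr_to0_add_le0 p_decr q_decr) => n.
have -> : a - b = - (x n - a) + (y n - b) by rewrite exy opprB addrA subrK.
by apply: rle_trans (rabsD _ _) _; rewrite rabsN; apply: rle_add2.
Qed.

Lemma seq_oconv0_eventually_small e (x : nat -> E) (c : R) :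
  0 <=R e -> (forall n, 0 <=R x n) -> (forall n, x n <=R c *: e) ->
  (forall eps : R, 0 < eps -> exists n0, forall n, (n0 <= n)%N -> x n <=R eps *: e) ->
  seq_oconv L x 0.
Proof.
move=> he x_ge0 x_ub x_small.
pose p n := rsup L (fun y => exists m, (n <= m)%N /\ y = x m).
have pP n : is_sup L (fun y => exists m, (n <= m)%N /\ y = x m) (p n).
  by apply: rsupP; [exists (x n), n|exists (c *: e) => _ [m [_ ->]]].
have x_le_p n m : (n <= m)%N -> x m <=R p n by move=> hm; apply: (pP n).1; exists m.
exists p; split; last first.
  by move=> n; rewrite subr0 rabs_id //; apply: x_le_p.
split.
  move=> a b hab; apply: (pP b).2 => _ [m [hm ->]].
  by apply: x_le_p; apply: leq_trans hm.
split=> [_ [n ->]|u u_lb]; first exact: rle_trans (x_ge0 n) (x_le_p n n (leqnn n)).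
apply: (dedekind_archimedean he) => eps heps.
have [n0 hn0] := x_small eps heps.
apply: rle_trans (u_lb (p n0) (ex_intro _ n0 erefl)) _.
by apply: (pP n0).2 => _ [m [hm ->]]; apply: hn0.
Qed.

End DedekindComplete.

(** * Band projections *)

(* For [w, z >= 0], [bproj_pos L w z] = sup_n (z /\ n w) is the component of z in the
   band generated by [w] (Riesz projection theorem); [bproj L w] extends it linearly
   through x = x^+ - x^-. *)
Definition bproj_pos {R : realType} {E : lmodType R} (L : riesz_space E) (w z : E) :=
  rsup L (fun y => exists n : nat, y = rmeet L z (n%:R *: w)).

Definition bproj {R : realType} {E : lmodType R} (L : riesz_space E) (w x : E) :=
  bproj_pos L w (rpos L x) - bproj_pos L w (rneg L x).

Section BandProjection.
Context {R : realType} {E : lmodType R} (L : riesz_space E) (HD : dedekind_complete L).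
Local Notation "x <=R y" := (rle L x y) (at level 70).
Variables (w : E) (hw : 0 <=R w).

Let natw_ge0 (n : nat) : 0 <=R n%:R *: w.
Proof. by apply: rscaler_ge0; rewrite ?ler0n. Qed.

Lemma bproj_posP z : 0 <=R z ->
  is_sup L (fun y => exists n : nat, y = rmeet L z (n%:R *: w)) (bproj_pos L w z).
Proof.
move=> hz; apply: (rsupP HD); first by exists (rmeet L z (0%:R *: w)), 0%N.
by exists z => _ [n ->]; apply: rmeet_lel.
Qed.

Lemma bproj_pos_ge z n : 0 <=R z -> rmeet L z (n%:R *: w) <=R bproj_pos L w z.
Proof. by move=> hz; apply: (bproj_posP hz).1; exists n. Qed.

Lemma bproj_pos_least z u : 0 <=R z ->
  (forall n : nat, rmeet L z (n%:R *: w) <=R u) -> bproj_pos L w z <=R u.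
Proof. by move=> hz h; apply: (bproj_posP hz).2 => _ [n ->]. Qed.

Lemma bproj_pos_le z : 0 <=R z -> bproj_pos L w z <=R z.
Proof. by move=> hz; apply: bproj_pos_least => // n; apply: rmeet_lel. Qed.

Lemma bproj_pos_ge0 z : 0 <=R z -> 0 <=R bproj_pos L w z.
Proof. by move=> hz; apply: rle_trans (bproj_pos_ge 0 hz); apply: rmeet_ge0. Qed.

Lemma bproj_pos_ge_real z (r : R) : 0 <=R z -> 0 <= r ->
  rmeet L z (r *: w) <=R bproj_pos L w z.
Proof.
move=> hz hr; apply: rle_trans (bproj_pos_ge (Num.Def.archi_bound r) hz).
apply: rle_meet; first exact: rle_refl.
by apply: rle_scalel => //; apply: ltW (archi_boundP hr).
Qed.

Lemma bproj_pos_homo z z' : 0 <=R z -> z <=R z' -> bproj_pos L w z <=R bproj_pos L w z'.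
Proof.
move=> hz hzz'; apply: bproj_pos_least => // n.
apply: rle_trans (bproj_pos_ge n (rle_trans hz hzz')).
by apply: rle_meet => //; apply: rle_refl.
Qed.

Lemma bproj_pos_id z (c : R) : 0 <=R z -> 0 <= c -> z <=R c *: w -> bproj_pos L w z = z.
Proof.
move=> hz hc hzc; apply: rle_anti; first exact: bproj_pos_le.
by have := bproj_pos_ge_real hz hc; rewrite rmeet_idl.
Qed.

Lemma bproj_pos_disj z : 0 <=R z -> rmeet L z w = 0 -> bproj_pos L w z = 0.
Proof.
move=> hz hzw; apply: rle_anti; last exact: bproj_pos_ge0.
apply: bproj_pos_least => // -[|n].
  by rewrite scale0r rmeetC rmeet_idl //; apply: rle_refl.
apply: rle_trans (_ : _ <=R rmeet L (n.+1%:R *: z) (n.+1%:R *: w)) _.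
  apply: rle_meet; last exact: rle_refl.
  by rewrite -[X in X <=R _]scale1r; apply: rle_scalel; rewrite ?ler1n.
by rewrite rmeet_scale ?hzw ?scaler0 ?ler0n //; apply: rle_refl.
Qed.

Lemma bproj_posD a b : 0 <=R a -> 0 <=R b ->
  bproj_pos L w (a + b) = bproj_pos L w a + bproj_pos L w b.
Proof.
move=> ha hb; have hab := raddr_ge0 ha hb; apply: rle_anti.
  apply: bproj_pos_least => // n; apply: rle_trans (rmeet_subadd ha hb (natw_ge0 n)) _.
  by apply: rle_add2; apply: bproj_pos_ge.
have sum_le n m : rmeet L a (n%:R *: w) + rmeet L b (m%:R *: w) <=R bproj_pos L w (a + b).
  apply: rle_trans (bproj_pos_ge (n + m) hab); apply: rmeet_greatest.
    by apply: rle_add2; apply: rmeet_lel.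
  by rewrite natrD scalerDl; apply: rle_add2; apply: rmeet_ler.
have ha_le m : bproj_pos L w a <=R bproj_pos L w (a + b) - rmeet L b (m%:R *: w).
  by apply: bproj_pos_least => // n; apply/rleBrDr.
rewrite addrC; apply/rleBrDr; apply: bproj_pos_least => // m.
by apply/rleBrDr; rewrite addrC; apply/rleBrDr.
Qed.

Lemma bproj_pos0 : bproj_pos L w 0 = 0.
Proof.
by apply: rle_anti; [apply: bproj_pos_le|apply: bproj_pos_ge0]; apply: rle_refl.
Qed.

Lemma bproj_posZ (t : R) z : 0 <= t -> 0 <=R z -> bproj_pos L w (t *: z) = t *: bproj_pos L w z.
Proof.
have scale_le s v : 0 < s -> 0 <=R v -> bproj_pos L w (s *: v) <=R s *: bproj_pos L w v.
  move=> hs hv; apply: bproj_pos_least; first by apply: rscaler_ge0; rewrite ?ltW.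
  move=> n; have -> : n%:R *: w = s *: ((n%:R / s) *: w).
    by rewrite scalerA mulrCA mulfV ?mulr1 // gt_eqF.
  rewrite rmeet_scale ?ltW //; apply: rle_scale; first exact: ltW.
  by apply: bproj_pos_ge_real => //; rewrite divr_ge0 ?ler0n ?ltW.
move=> ht hz; have [->|t0] := eqVneq t 0; first by rewrite !scale0r bproj_pos0.
have htp : 0 < t by rewrite lt_def t0.
apply: rle_anti; first exact: scale_le.
have hti : 0 < t^-1 by rewrite invr_gt0.
have := scale_le _ _ hti (rscaler_ge0 ht hz); rewrite scalerA mulVf // scale1r => h.
by have := rle_scale ht h; rewrite scalerA mulfV // scale1r.
Qed.

Lemma bproj_sub_pos a b : 0 <=R a -> 0 <=R b ->
  bproj L w (a - b) = bproj_pos L w a - bproj_pos L w b.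
Proof.
move=> ha hb; apply/subr_eq_sub.
rewrite -(bproj_posD (rpos_ge0 _) hb) -(bproj_posD ha (rneg_ge0 _)).
by congr (bproj_pos L w _); apply/subr_eq_sub; rewrite rpos_sub_neg.
Qed.

Lemma bprojE z : 0 <=R z -> bproj L w z = bproj_pos L w z.
Proof. by move=> hz; rewrite -[z]subr0 bproj_sub_pos ?bproj_pos0 ?subr0 //; apply: rle_refl. Qed.

Lemma bprojD x y : bproj L w (x + y) = bproj L w x + bproj L w y.
Proof.
have -> : x + y = (rpos L x + rpos L y) - (rneg L x + rneg L y).
  by rewrite opprD addrACA !rpos_sub_neg.
have [px py] := (rpos_ge0 (L:=L) x, rpos_ge0 (L:=L) y).
have [nx ny] := (rneg_ge0 (L:=L) x, rneg_ge0 (L:=L) y).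
rewrite (bproj_sub_pos (raddr_ge0 px py) (raddr_ge0 nx ny)).
by rewrite (bproj_posD px py) (bproj_posD nx ny) opprD addrACA.
Qed.

Lemma bprojN x : bproj L w (- x) = - bproj L w x.
Proof. by rewrite /bproj rposN rnegN opprB. Qed.

Lemma bprojB x y : bproj L w (x - y) = bproj L w x - bproj L w y.
Proof. by rewrite bprojD bprojN. Qed.

Lemma bprojZ (t : R) x : bproj L w (t *: x) = t *: bproj L w x.
Proof.
wlog ht : t x / 0 <= t.
  move=> h; have [/h //|ht] := lerP 0 t.
  have -> : t *: x = (- t) *: (- x) by rewrite scaleNr scalerN opprK.
  by rewrite h ?oppr_ge0 ?ltW // bprojN scaleNr scalerN opprK.
have [px nx] := (rpos_ge0 (L:=L) x, rneg_ge0 (L:=L) x).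
rewrite -[x in LHS](rpos_sub_neg (L:=L)) scalerBr.
rewrite (bproj_sub_pos (rscaler_ge0 ht px) (rscaler_ge0 ht nx)).
by rewrite (bproj_posZ ht px) (bproj_posZ ht nx) -scalerBr.
Qed.

Lemma bproj_ge0 z : 0 <=R z -> 0 <=R bproj L w z.
Proof. by move=> hz; rewrite bprojE //; apply: bproj_pos_ge0. Qed.

Lemma bproj_homo x y : x <=R y -> bproj L w x <=R bproj L w y.
Proof. by move=> /rsubr_ge0 h; apply/rsubr_ge0; rewrite -bprojB; apply: bproj_ge0. Qed.

Lemma bproj_le z : 0 <=R z -> bproj L w z <=R z.
Proof. by move=> hz; rewrite bprojE //; apply: bproj_pos_le. Qed.

Lemma bproj_compl_homo x y : x <=R y -> x - bproj L w x <=R y - bproj L w y.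
Proof.
move=> /rsubr_ge0 hxy; apply/rleBrDr.
rewrite -addrA [- _ + _]addrC -bprojB addrC; apply/rleBrDr.
exact: bproj_le.
Qed.

Lemma bproj_idem z : 0 <=R z -> bproj L w (bproj L w z) = bproj L w z.
Proof.
move=> hz; have hq := bproj_ge0 hz; rewrite [in RHS]bprojE // !bprojE //; last by rewrite -bprojE.
apply: rle_anti; first by apply: bproj_pos_le; rewrite -bprojE.
apply: bproj_pos_least => // n.
have hzn : 0 <=R rmeet L z (n%:R *: w) by apply: rmeet_ge0.
rewrite -(@bproj_pos_id (rmeet L z (n%:R *: w)) n%:R) ?ler0n //; last exact: rmeet_ler.
by apply: bproj_pos_homo => //; apply: bproj_pos_ge.
Qed.

Section BandOfUnit.
Variables (e : E) (he : 0 <=R e).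

Lemma bproj_id_le_unit v (M : R) : 0 <=R v -> v <=R M *: bproj L w e -> bproj L w v = v.
Proof.
move=> hv hvM; have : v - bproj L w v <=R 0.
  have := bproj_compl_homo hvM.
  by rewrite bprojZ -scalerBr bproj_idem // subrr scaler0.
by move=> /rsubr_le0 h; apply: rle_anti (bproj_le hv) h.
Qed.

Lemma bproj_eq0_le_unit v (M : R) : 0 <=R v -> v <=R M *: (e - bproj L w e) ->
  bproj L w v = 0.
Proof.
move=> hv hvM; apply: rle_anti; last exact: bproj_ge0.
by have := bproj_homo hvM; rewrite bprojZ bprojB bproj_idem // subrr scaler0.
Qed.

End BandOfUnit.
End BandProjection.

Section BandProjectionTheory.
Context {R : realType} {E : lmodType R} (L : riesz_space E) (HD : dedekind_complete L).
Local Notation "x <=R y" := (rle L x y) (at level 70).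

Lemma bproj_homo_gen w w' z : 0 <=R w -> w <=R w' -> 0 <=R z ->
  bproj L w z <=R bproj L w' z.
Proof.
move=> hw hww' hz; have hw' := rle_trans hw hww'.
rewrite !bprojE //; apply: (bproj_pos_least HD) => // n.
apply: rle_trans _ (bproj_pos_ge HD w' n hz); apply: rle_meet; first exact: rle_refl.
by apply: rle_scale; rewrite ?ler0n.
Qed.

Lemma bproj_rpos_self z : bproj L (rpos L z) z = rpos L z.
Proof.
have hz := rpos_ge0 (L:=L) z.
rewrite -[z in bproj _ _ z](rpos_sub_neg (L:=L)) (bproj_sub_pos HD hz hz (rneg_ge0 _)).
rewrite (@bproj_pos_id _ _ _ HD _ hz _ 1) ?scale1r //; last exact: rle_refl.
by rewrite (bproj_pos_disj HD hz (rneg_ge0 _)) ?subr0 // rmeetC rmeet_pos_neg.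
Qed.

End BandProjectionTheory.

(** * Conditional expectations and band projections *)

Section LinearOperator.
Context {R : realType} {E : lmodType R} (L : riesz_space E).
Local Notation "x <=R y" := (rle L x y) (at level 70).
Variables (T : E -> E) (T_lin : is_linear T).

Lemma linD x y : T (x + y) = T x + T y.
Proof. by have := T_lin 1 x y; rewrite !scale1r. Qed.

Lemma lin0 : T 0 = 0.
Proof. by apply: (@addrI _ (T 0)); rewrite -linD !addr0. Qed.

Lemma linZ (a : R) x : T (a *: x) = a *: T x.
Proof. by have := T_lin a x 0; rewrite !addr0 lin0 addr0. Qed.

Lemma linN x : T (- x) = - T x.
Proof. by rewrite -scaleN1r linZ scaleN1r. Qed.

Lemma linB x y : T (x - y) = T x - T y.
Proof. by rewrite linD linN. Qed.

Lemma lin_sum (I : Type) (r : seq I) (P : pred I) (F : I -> E) :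
  T (\sum_(i <- r | P i) F i) = \sum_(i <- r | P i) T (F i).
Proof.
elim: r => [|a r IH]; first by rewrite !big_nil lin0.
by rewrite !big_cons; case: ifP => _ //; rewrite linD IH.
Qed.

Variable (T_pos : positive_op L T).

Lemma posop_homo x y : x <=R y -> T x <=R T y.
Proof. by move=> /rsubr_ge0 h; apply/rsubr_ge0; rewrite -linB; apply: T_pos. Qed.

Lemma posop_abs x : rabs L (T x) <=R T (rabs L x).
Proof.
by apply: rabs_le; rewrite -?linN; apply: posop_homo; [apply: rabs_ge|apply: rabs_geN].
Qed.

End LinearOperator.

Section RangeOfProjection.
Context {R : realType} {E : lmodType R} (L : riesz_space E).
Variables (T : E -> E) (T_rs : riesz_subspace L (range T)).

Lemma range_id (T_idem : forall x, T (T x) = T x) x : range T x -> T x = x.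
Proof. by case=> y <-; rewrite T_idem. Qed.

Lemma range_fixed x : T x = x -> range T x.
Proof. by exists x. Qed.

Lemma range0 : range T 0.
Proof. by case: T_rs. Qed.

Lemma rangeD x y : range T x -> range T y -> range T (x + y).
Proof. by case: T_rs => _ h _ _; apply: h. Qed.

Lemma rangeZ (a : R) x : range T x -> range T (a *: x).
Proof. by case: T_rs => _ _ h _; apply: h. Qed.

Lemma range_join x y : range T x -> range T y -> range T (rjoin L x y).
Proof. by case: T_rs => _ _ _ h; apply: h. Qed.

Lemma rangeN x : range T x -> range T (- x).
Proof. by rewrite -scaleN1r; apply: rangeZ. Qed.

Lemma rangeB x y : range T x -> range T y -> range T (x - y).
Proof. by move=> hx hy; apply: rangeD => //; apply: rangeN. Qed.

Lemma range_meet x y : range T x -> range T y -> range T (rmeet L x y).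
Proof. by move=> hx hy; apply: rangeN; apply: range_join; apply: rangeN. Qed.

Lemma range_rpos x : range T x -> range T (rpos L x).
Proof. by move=> hx; apply: range_join => //; apply: range0. Qed.

Lemma range_sum (I : Type) (r : seq I) (P : pred I) (F : I -> E) :
  (forall i, P i -> range T (F i)) -> range T (\sum_(i <- r | P i) F i).
Proof.
move=> h; elim: r => [|a r IH]; first by rewrite big_nil; apply: range0.
by rewrite big_cons; case: ifP => // Pa; apply: rangeD => //; apply: h.
Qed.

End RangeOfProjection.

Section CondExpBandProjection.
Context {R : realType} {E : lmodType R} (L : riesz_space E) (HD : dedekind_complete L).
Local Notation "x <=R y" := (rle L x y) (at level 70).
Variables (T : E -> E) (T_lin : is_linear T) (T_pos : positive_op L T)
  (T_idem : forall x, T (T x) = T x) (T_rs : riesz_subspace L (range T))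
  (T_oc : order_continuous L T).
Variables (e w : E) (he : 0 <=R e) (Te : T e = e) (hw : 0 <=R w) (w_range : range T w).

(* [bproj L w e] is the order limit of the increasing sequence [e /\ n w] in R(T). *)
Lemma bproj_unit_fixed : T (bproj L w e) = bproj L w e.
Proof.
rewrite (bprojE HD hw he).
pose x n := rmeet L e (n%:R *: w).
have x_cvg : seq_oconv L x (bproj_pos L w e).
  apply: seq_oconv_sup; last exact: bproj_posP.
  move=> n m hnm; apply: rle_meet; first exact: rle_refl.
  by apply: rle_scalel => //; rewrite ler_nat.
apply: seq_oconv_uniq _ (T_oc leq_directed x_cvg) x_cvg => n.
apply: range_id => //; apply: range_meet => //; first exact: range_fixed.
exact: (rangeZ T_rs _ w_range).
Qed.

Lemma bproj_comm_ge0 x (M : R) : 0 <=R x -> x <=R M *: e -> T (bproj L w x) = bproj L w (T x).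
Proof.
move=> hx hxM; set y := x - bproj L w x.
have Tq := bproj_unit_fixed.
have band_part : bproj L w (T (bproj L w x)) = T (bproj L w x).
  apply: (bproj_id_le_unit HD hw he (M := M)); first exact/T_pos/(bproj_ge0 HD hw).
  rewrite -Tq -linZ //; apply: posop_homo => //.
  by rewrite -(bprojZ HD hw); apply: (bproj_homo HD hw).
have compl_part : bproj L w (T y) = 0.
  apply: (bproj_eq0_le_unit HD hw he (M := M)).
    by apply/T_pos/rsubr_ge0; apply: (bproj_le HD hw).
  apply: rle_trans (posop_homo T_lin T_pos (bproj_compl_homo HD hw hxM)) _.
  by rewrite (bprojZ HD hw) -scalerBr linZ // linB // Te Tq; apply: rle_refl.
rewrite -[in RHS](subrK (bproj L w x) x) [in RHS](linD T_lin) (bprojD HD hw).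
by rewrite -/y compl_part add0r band_part.
Qed.

Lemma bproj_comm x (M : R) : rabs L x <=R M *: e -> T (bproj L w x) = bproj L w (T x).
Proof.
move=> hxM; have hp := rle_trans (rpos_le_abs x) hxM; have hn := rle_trans (rneg_le_abs x) hxM.
rewrite -[x in LHS](rpos_sub_neg (L:=L)) (bprojB HD hw) (linB T_lin).
rewrite -[x in RHS](rpos_sub_neg (L:=L)) [in RHS](linB T_lin) (bprojB HD hw).
by rewrite (bproj_comm_ge0 (rpos_ge0 _) hp) (bproj_comm_ge0 (rneg_ge0 _) hn).
Qed.

End CondExpBandProjection.

(** * The discretised square and its one-step estimate *)

(* The nodes k_i = i - K, i = 0..2K, run through the integers of [-K, K];
   [tangent e K x i] = 2 k_i x - k_i^2 e is the tangent of x^2 at k_i (in units of e),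
   and [dsq L e K] is their upper envelope, a discretised square. *)
Definition knode {R : realType} (K i : nat) : R := i%:R - K%:R.

Definition tangent {R : realType} {E : lmodType R} (e : E) (K : nat) (x : E) (i : nat) :=
  (2 * knode K i) *: x - (knode K i ^+ 2) *: e.

Definition dsq {R : realType} {E : lmodType R} (L : riesz_space E) (e : E) (K : nat) (x : E) :=
  rsup L (fun y => exists i, (i <= K.*2)%N /\ y = tangent e K x i).

Lemma knodeS {R : realType} K i : knode K i.+1 = knode K i + 1 :> R.
Proof. by rewrite /knode -natr1 addrAC. Qed.

Lemma knode_sub_ge1 {R : realType} K i j : (i < j)%N -> 1 <= knode K j - knode K i :> R.
Proof.
move=> ij; have : i.+1%:R <= j%:R :> R by rewrite ler_nat.
by rewrite /knode -natr1; lra.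
Qed.

Lemma knode_norm_le {R : realType} K i : (i <= K.*2)%N -> `|knode K i| <= K%:R :> R.
Proof.
move=> hi; have : i%:R <= K.*2%:R :> R by rewrite ler_nat.
rewrite -muln2 natrM /knode => h2; have h0 : 0 <= i%:R :> R by rewrite ler0n.
by rewrite ler_norml; apply/andP; split; lra.
Qed.

Lemma tangentD {R : realType} {E : lmodType R} (e : E) K x y i :
  tangent e K (x + y) i = tangent e K x i + (2 * knode K i) *: y.
Proof. by rewrite /tangent scalerDr addrAC. Qed.

Section DiscreteSquare.
Context {R : realType} {E : lmodType R} (L : riesz_space E) (HD : dedekind_complete L).
Local Notation "x <=R y" := (rle L x y) (at level 70).
Variables (e : E) (he : 0 <=R e) (K : nat).

Lemma dsqP x :
  is_sup L (fun y => exists i, (i <= K.*2)%N /\ y = tangent e K x i) (dsq L e K x).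
Proof.
apply: (rsupP HD); first by exists (tangent e K x 0), 0%N.
exists ((2 * K%:R) *: rabs L x) => _ [i [hi ->]].
apply: rle_trans (_ : _ <=R (2 * knode K i) *: x) _.
  by apply/rleBlDr; rewrite -[X in X <=R _]addr0; apply: rle_addl;
    apply: rscaler_ge0 => //; apply: sqr_ge0.
apply: rle_trans (rscale_le_abs _ _) _; apply: rle_scalel; last exact: rabs_ge0.
by rewrite normrM ger0_norm //; apply: ler_wpM2l => //; apply: knode_norm_le.
Qed.

Lemma tangent_le_dsq x i : (i <= K.*2)%N -> tangent e K x i <=R dsq L e K x.
Proof. by move=> hi; apply: (dsqP x).1; exists i. Qed.

Lemma dsq_least x u : (forall i, (i <= K.*2)%N -> tangent e K x i <=R u) -> dsq L e K x <=R u.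
Proof. by move=> h; apply: (dsqP x).2 => _ [i [hi ->]]; apply: h. Qed.

Lemma dsq0_le0 : dsq L e K 0 <=R 0.
Proof.
apply: dsq_least => i _; rewrite /tangent scaler0 add0r; apply/roppr_le0.
by apply: rscaler_ge0 => //; apply: sqr_ge0.
Qed.

Lemma dsq_ge_abs x : (2 * K%:R) *: rabs L x <=R dsq L e K x + (K%:R ^+ 2) *: e.
Proof.
rewrite -rabsZ ?mulr_ge0 ?ler0n //; apply: rabs_le; apply/rleBlDr.
  have := tangent_le_dsq x (leqnn K.*2).
  by rewrite /tangent /knode -muln2 natrM (_ : K%:R * 2 - K%:R = K%:R :> R) //; ring.
have := tangent_le_dsq x (leq0n K.*2).
by rewrite /tangent /knode sub0r sqrrN mulrN scaleNr.
Qed.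

End DiscreteSquare.

Lemma tangent_diff {R : realType} {E : lmodType R} (e : E) K x i j :
  tangent e K x i - tangent e K x j =
  (2 * (knode K i - knode K j)) *: x - (knode K i ^+ 2 - knode K j ^+ 2) *: e.
Proof.
rewrite /tangent; move: (knode K i) (knode K j) => ki kj.
by rewrite mulrBr !scalerBl !opprB addrACA [RHS]addrACA [- (_ *: x) - _]addrC.
Qed.

Lemma scale_recenter {R : pzRingType} {V : lmodType R} (t b c : R) (v u : V) :
  t *: v + c *: u = t *: (v - b *: u) + (c + t * b) *: u.
Proof. by rewrite scalerBr scalerA scalerDl [c *: u + _]addrC addrA subrK. Qed.

Definition step_const {R : realType} (M : R) : R := (1 + 2 * M) ^+ 2.

Lemma step_const_ge {R : realType} (d M : R) : 0 <= d ^+ 2 - d - 2 * d * M + step_const M.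
Proof.
rewrite /step_const; have := sqr_ge0 (d - (1 + 2 * M) / 2); have := sqr_ge0 (1 + 2 * M).
by nra.
Qed.

Section SlabDecomposition.
Context {R : realType} {E : lmodType R} (L : riesz_space E) (HD : dedekind_complete L).
Local Notation "x <=R y" := (rle L x y) (at level 70).
Variables (e : E) (he : 0 <=R e) (K : nat).
Variables (Tm : E -> E) (Tm_lin : is_linear Tm) (Tm_pos : positive_op L Tm)
  (Tm_idem : forall x, Tm (Tm x) = Tm x) (Tm_rs : riesz_subspace L (range Tm))
  (Tm_oc : order_continuous L Tm) (Tme : Tm e = e).
Variables (S : E) (S_range : range Tm S).

Definition midnode i : R := knode K i - 2^-1.

Definition above_part i := rpos L (S - midnode i *: e).

(* [proj_above i] projects onto the band where S > (k_i - 1/2) e (all of E for i = 0,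
   nothing beyond 2K), so [proj_slab i] projects onto the band where k_i e is the node
   nearest to S. *)
Definition proj_above i x :=
  if i == 0%N then x else if (K.*2 < i)%N then 0 else bproj L (above_part i) x.

Definition proj_slab i x := proj_above i x - proj_above i.+1 x.

Lemma above_part_ge0 i : 0 <=R above_part i. Proof. exact: rpos_ge0. Qed.

Lemma above_part_range i : range Tm (above_part i).
Proof.
apply: range_rpos Tm_rs _ _; apply: rangeB Tm_rs _ _ S_range _.
exact: (rangeZ Tm_rs _ (range_fixed Tme)).
Qed.

Lemma proj_aboveD i x y : proj_above i (x + y) = proj_above i x + proj_above i y.
Proof.
rewrite /proj_above; case: eqP => // _; case: ifP => _; first by rewrite addr0.
exact: (bprojD HD (above_part_ge0 i)).
Qed.

Lemma proj_aboveZ i (t : R) x : proj_above i (t *: x) = t *: proj_above i x.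
Proof.
rewrite /proj_above; case: eqP => // _; case: ifP => _; first by rewrite scaler0.
exact: (bprojZ HD (above_part_ge0 i)).
Qed.

Lemma proj_above_ge0 i x : 0 <=R x -> 0 <=R proj_above i x.
Proof.
rewrite /proj_above; case: eqP => // _; case: ifP => _ hx; first exact: rle_refl.
exact: (bproj_ge0 HD (above_part_ge0 i) hx).
Qed.

Lemma proj_above_homo i x y : x <=R y -> proj_above i x <=R proj_above i y.
Proof.
move=> /rsubr_ge0 hxy; apply/rsubr_ge0.
by rewrite -scaleN1r -proj_aboveZ -proj_aboveD scaleN1r; apply: proj_above_ge0.
Qed.

Lemma proj_above_le i x : 0 <=R x -> proj_above i x <=R x.
Proof.
rewrite /proj_above; case: eqP => _ hx; first exact: rle_refl.
by case: ifP => _ //; apply: (bproj_le HD (above_part_ge0 i)).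
Qed.

Lemma proj_above_decr i x : 0 <=R x -> proj_above i.+1 x <=R proj_above i x.
Proof.
move=> hx; rewrite {1}/proj_above /=; case: ifP => hi; first exact: proj_above_ge0.
rewrite /proj_above; case: eqP => [->|i0]; first exact: (bproj_le HD (above_part_ge0 1)).
rewrite ifF; last by apply/negbTE; move/negbT: hi; lia.
apply: (bproj_homo_gen HD (above_part_ge0 _)) => //.
apply: rle_join; last exact: rle_refl.
apply: rle_addl; apply: rle_opp; apply: rle_scalel => //.
by rewrite /midnode knodeS; lra.
Qed.

Lemma proj_above_comm i x (M : R) : rabs L x <=R M *: e -> Tm (proj_above i x) = proj_above i (Tm x).
Proof.
move=> hxM; rewrite /proj_above; case: eqP => // _; case: ifP => _; first exact: lin0.
exact: (bproj_comm HD Tm_lin Tm_pos Tm_idem Tm_rs Tm_oc he Tme (above_part_ge0 i) (above_part_range i) hxM).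
Qed.

Lemma proj_slabD i x y : proj_slab i (x + y) = proj_slab i x + proj_slab i y.
Proof. by rewrite /proj_slab !proj_aboveD opprD addrACA. Qed.

Lemma proj_slabZ i (t : R) x : proj_slab i (t *: x) = t *: proj_slab i x.
Proof. by rewrite /proj_slab !proj_aboveZ scalerBr. Qed.

Lemma proj_slabN i x : proj_slab i (- x) = - proj_slab i x.
Proof. by rewrite -scaleN1r proj_slabZ scaleN1r. Qed.

Lemma proj_slab0 i : proj_slab i 0 = 0.
Proof. by rewrite -(scale0r (0 : E)) proj_slabZ !scale0r. Qed.

Lemma proj_slab_ge0 i x : 0 <=R x -> 0 <=R proj_slab i x.
Proof. by move=> hx; apply/rsubr_ge0; apply: proj_above_decr. Qed.

Lemma sum_proj_slab x : \sum_(0 <= i < K.*2.+1) proj_slab i x = x.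
Proof.
rewrite /proj_slab (telescope_sumr_eq (fun i => - proj_above i x)) //.
  by rewrite /proj_above /= ltnSn opprK oppr0 add0r.
by move=> i _; rewrite opprK addrC.
Qed.

Lemma proj_slab_commute i x (M : R) : rabs L x <=R M *: e ->
  Tm (proj_slab i x) = proj_slab i (Tm x).
Proof. by move=> hxM; rewrite /proj_slab linB // !(proj_above_comm _ hxM). Qed.

Lemma proj_slab_lower i : (0 < i)%N -> (i <= K.*2)%N -> 0 <=R proj_slab i (S - midnode i *: e).
Proof.
move=> i_gt0 i_le; set z := S - midnode i *: e; rewrite /proj_slab.
have -> : proj_above i z = rpos L z.
  by rewrite /proj_above gtn_eqF // ltnNge i_le /= (bproj_rpos_self HD).
apply/rsubr_ge0; apply: rle_trans (proj_above_homo _ (rjoin_ubl L z 0)) _.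
exact: proj_above_le (rpos_ge0 _).
Qed.

Lemma proj_slab_upper i : (i < K.*2)%N -> proj_slab i (S - midnode i.+1 *: e) <=R 0.
Proof.
move=> i_lt; set z := S - midnode i.+1 *: e; rewrite /proj_slab.
have -> : proj_above i.+1 z = rpos L z.
  by rewrite /proj_above /= ltnNge i_lt /= (bproj_rpos_self HD).
apply/rsubr_le0; apply: rle_trans (proj_above_homo _ (rjoin_ubl L z 0)) _.
exact: proj_above_le (rpos_ge0 _).
Qed.


Variables (g : E) (M : R) (hg : rabs L g <=R M *: e).

Lemma proj_slab_tangent_step_lt i j : (i < j)%N -> (j <= K.*2)%N ->
  0 <=R proj_slab i (tangent e K (S + g) i - tangent e K (S + g) j + step_const M *: e).
Proof.
move=> ij hj; have hd := knode_sub_ge1 (R := R) K ij; have [_ g_ub] := rabs_le_bounds hg.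
rewrite tangent_diff -scaleNr (scale_recenter _ (midnode i.+1 + M)) -addrA -scalerDl.
have -> : (2 * (knode K i - knode K j)) *: (S + g - (midnode i.+1 + M) *: e) =
    (2 * (knode K j - knode K i)) *: (- (S - midnode i.+1 *: e) + (M *: e - g)).
  rewrite -opprB mulrN scaleNr -scalerN; congr (_ *: _).
  by rewrite !opprB scalerDl opprD addrACA.
rewrite proj_slabD !proj_slabZ proj_slabD proj_slabN; apply: raddr_ge0; apply: rscaler_ge0.
- lra.
- apply: raddr_ge0; first by apply/roppr_ge0; apply: proj_slab_upper; apply: leq_trans hj.
  by apply: proj_slab_ge0; apply/rsubr_ge0.
- have -> : - (knode K i ^+ 2 - knode K j ^+ 2) +
      2 * (knode K i - knode K j) * (midnode i.+1 + M) + step_const M =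
    (knode K j - knode K i) ^+ 2 - (knode K j - knode K i) -
      2 * (knode K j - knode K i) * M + step_const M.
    by rewrite /midnode knodeS; field.
  exact: step_const_ge.
- exact: proj_slab_ge0.
Qed.

Lemma proj_slab_tangent_step_gt i j : (j < i)%N -> (i <= K.*2)%N ->
  0 <=R proj_slab i (tangent e K (S + g) i - tangent e K (S + g) j + step_const M *: e).
Proof.
move=> ji hi; have hd := knode_sub_ge1 (R := R) K ji; have [g_lb _] := rabs_le_bounds hg.
rewrite tangent_diff -scaleNr (scale_recenter _ (midnode i - M)) -addrA -scalerDl.
have -> : S + g - (midnode i - M) *: e = (S - midnode i *: e) + (g + M *: e).
  by rewrite scalerBl opprB [M *: e - _]addrC addrACA.
rewrite proj_slabD !proj_slabZ proj_slabD; apply: raddr_ge0; apply: rscaler_ge0.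
- lra.
- apply: raddr_ge0; first by apply: proj_slab_lower; [apply: leq_ltn_trans ji|].
  by apply: proj_slab_ge0; have /rsubr_ge0 := g_lb; rewrite opprK.
- have -> : - (knode K i ^+ 2 - knode K j ^+ 2) +
      2 * (knode K i - knode K j) * (midnode i - M) + step_const M =
    (knode K i - knode K j) ^+ 2 - (knode K i - knode K j) -
      2 * (knode K i - knode K j) * M + step_const M.
    by rewrite /midnode; field.
  exact: step_const_ge.
- exact: proj_slab_ge0.
Qed.

(* On slab i, S + g lies within (1/2 + M) e of k_i e, where the tangent at k_i beats
   every other tangent up to (1 + 2M)^2 e. *)
Lemma proj_slab_tangent_step i j : (i <= K.*2)%N -> (j <= K.*2)%N ->
  0 <=R proj_slab i (tangent e K (S + g) i - tangent e K (S + g) j + step_const M *: e).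
Proof.
move=> hi hj; have [ij|ji|<-] := ltngtP i j.
- exact: proj_slab_tangent_step_lt.
- exact: proj_slab_tangent_step_gt.
rewrite subrr add0r; apply: proj_slab_ge0.
by apply: rscaler_ge0 => //; apply: sqr_ge0.
Qed.

Let first_order := \sum_(0 <= i < K.*2.+1) (2 * knode K i) *: proj_slab i g.

Lemma dsq_step : dsq L e K (S + g) <=R dsq L e K S + first_order + step_const M *: e.
Proof.
apply: (dsq_least HD he) => j hj; apply/rsubr_ge0.
set A := dsq L e K S + step_const M *: e - tangent e K (S + g) j.
have -> : dsq L e K S + first_order + step_const M *: e - tangent e K (S + g) j =
    \sum_(0 <= i < K.*2.+1) proj_slab i (A + (2 * knode K i) *: g).
  under eq_bigr do rewrite proj_slabD proj_slabZ.
  rewrite big_split /= sum_proj_slab /A -!addrA; congr (_ + _).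
  by rewrite addrC -addrA.
rewrite big_nat; apply: rsumr_ge0 => i /andP[_ hi].
have -> : A + (2 * knode K i) *: g = (dsq L e K S - tangent e K S i) +
    (tangent e K (S + g) i - tangent e K (S + g) j + step_const M *: e).
  by rewrite tangentD /A (subr_insert _ _ (tangent e K S i)).
rewrite proj_slabD; apply: raddr_ge0; last exact: proj_slab_tangent_step.
by apply: proj_slab_ge0; apply/rsubr_ge0; apply: (tangent_le_dsq HD he).
Qed.

Variables (T : E -> E) (T_lin : is_linear T) (T_pos : positive_op L T)
  (T_Tm : forall x, T (Tm x) = T x) (Te : T e = e) (Tm_g : Tm g = 0).

Lemma cond_exp_dsq_step : T (dsq L e K (S + g)) <=R T (dsq L e K S) + step_const M *: e.
Proof.
apply: rle_trans (posop_homo T_lin T_pos dsq_step) _.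
have T_first_order : T first_order = 0.
  rewrite /first_order (lin_sum T_lin) big1 // => i _.
  rewrite (linZ T_lin) -T_Tm (proj_slab_commute i hg) Tm_g.
  by rewrite proj_slab0 (lin0 T_lin) scaler0.
by rewrite !(linD T_lin) T_first_order addr0 (linZ T_lin) Te; apply: rle_refl.
Qed.

End SlabDecomposition.

(** * Averages of martingale differences *)

Lemma quadratic_tradeoff {R : realType} (C eps : R) : 0 <= C -> 0 < eps ->
  exists K n0 : nat, (0 < K)%N /\ forall n, (n0 <= n)%N ->
    n.+1%:R * C + K%:R ^+ 2 <= eps * (2 * K%:R * n.+1%:R).
Proof.
move=> hC heps; pose K := (Num.Def.archi_bound (C / eps)).+1.
have hK : C <= eps * K%:R.
  rewrite mulrC -ler_pdivrMr //; have := archi_boundP (divr_ge0 hC (ltW heps)).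
  by rewrite /K -natr1; lra.
exists K, (Num.Def.archi_bound (K%:R / eps)); split=> // n hn.
have hKn : K%:R <= eps * n.+1%:R.
  rewrite mulrC -ler_pdivrMr //; have := archi_boundP (divr_ge0 (ler0n R K) (ltW heps)).
  move=> /ltW /le_trans; apply; rewrite ler_nat; exact: leq_trans hn _.
have hK0 : 0 <= K%:R :> R by rewrite ler0n.
have hn0 : 0 <= n.+1%:R :> R by rewrite ler0n.
nra.
Qed.

Section MartingaleDifferences.
Context {R : realType} {E : lmodType R} (L : riesz_space E) (HD : dedekind_complete L).
Local Notation "x <=R y" := (rle L x y) (at level 70).
Variables (T : E -> E) (HT : cond_exp L T) (e : E) (he : 0 <=R e) (Te : T e = e).
Variables (Ti : nat -> E -> E) (HF : filtration L Ti) (Hcomp : compatible T Ti).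
Variables (f : nat -> E) (f_adapted : forall i, range (Ti i) (f i)).
Variables (B : R) (f_bounded : forall i, rabs L (f i) <=R B *: e).

Definition mdiff i := f i - Ti i.-1 (f i).

Definition psum m := \sum_(1 <= i < m.+1) mdiff i.

Let Ti_lin i : is_linear (Ti i). Proof. by case: (HF.1 i). Qed.
Let Ti_pos i : positive_op L (Ti i). Proof. by case: (HF.1 i). Qed.

Lemma filtration_unit i : Ti i e = e.
Proof. by rewrite -{1}Te (Hcomp i e).1. Qed.

Lemma range_filtration i j x : (i <= j)%N -> range (Ti i) x -> range (Ti j) x.
Proof. by move=> hij [y <-]; apply: range_fixed; apply: (HF.2 i j hij y).2. Qed.

Lemma mdiff_range i : (0 < i)%N -> range (Ti i) (mdiff i).
Proof.
move=> hi; have [_ _ _ _ [_ rs _]] := HF.1 i.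
apply: rangeB rs _ _ (f_adapted i) _; apply: range_fixed.
by apply: (HF.2 i.-1 i (leq_pred i) (f i)).2.
Qed.

Lemma mdiff_cond0 i : Ti i (mdiff i.+1) = 0.
Proof. by have [_ _ _ idem _] := HF.1 i; rewrite /mdiff linB // idem subrr. Qed.

Lemma mdiff_bound i : rabs L (mdiff i) <=R (2 * B) *: e.
Proof.
apply: rle_trans (rabsD _ _) _; rewrite rabsN mulr_natl mulr2n scalerDl.
apply: rle_add2; first exact: f_bounded.
apply: rle_trans (posop_abs (Ti_lin _) (Ti_pos _) _) _.
apply: rle_trans (posop_homo (Ti_lin _) (Ti_pos _) (f_bounded i)) _.
by rewrite linZ // filtration_unit; apply: rle_refl.
Qed.

Lemma psum_range m : range (Ti m) (psum m).
Proof.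
have [_ _ _ _ [_ rs _]] := HF.1 m; rewrite /psum big_nat.
apply: (range_sum rs) => i /andP[hi1 him].
by apply: range_filtration (mdiff_range hi1).
Qed.

Lemma cond_exp_dsq_psum K m : T (dsq L e K (psum m)) <=R (m%:R * step_const (2 * B)) *: e.
Proof.
have [T_lin T_pos _ _ _] := HT.
elim: m => [|m IH].
  rewrite /psum big_geq // mul0r scale0r.
  by have := posop_homo T_lin T_pos (dsq0_le0 HD he K); rewrite (lin0 T_lin).
have [_ _ oc idem [_ rs _]] := HF.1 m.
rewrite /psum big_nat_recr //= -/(psum m).
apply: rle_trans (cond_exp_dsq_step HD he K (Ti_lin m) (Ti_pos m) idem rs oc
  (filtration_unit m) (psum_range m) (mdiff_bound m.+1) T_lin T_pos (fun x => (Hcomp m x).2)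
  Te (mdiff_cond0 m)) _.
by rewrite -[m.+1%:R]natr1 (mulrDl m%:R 1) mul1r scalerDl; apply: rle_add.
Qed.

Lemma cond_exp_abs_avg_le K n (c : R) : (0 < K)%N ->
  n.+1%:R * step_const (2 * B) + K%:R ^+ 2 <= c * (2 * K%:R * n.+1%:R) ->
  T (rabs L (n.+1%:R^-1 *: psum n.+1)) <=R c *: e.
Proof.
move=> K_gt0 hc; have [T_lin T_pos _ _ _] := HT.
have t_gt0 : 0 < 2 * K%:R * n.+1%:R :> R by rewrite !mulr_gt0 ?ltr0n.
have n_neq0 : n.+1%:R != 0 :> R by rewrite pnatr_eq0.
suff h : (2 * K%:R * n.+1%:R) *: T (rabs L (n.+1%:R^-1 *: psum n.+1)) <=R
    (c * (2 * K%:R * n.+1%:R)) *: e.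
  have ti_ge0 : 0 <= (2 * K%:R * n.+1%:R)^-1 :> R by rewrite invr_ge0 ltW.
  have := rle_scale ti_ge0 h; rewrite !scalerA mulVf ?gt_eqF // scale1r.
  by rewrite mulrCA mulVf ?gt_eqF // mulr1.
apply: rle_trans (_ : _ <=R T (dsq L e K (psum n.+1)) + (K%:R ^+ 2) *: e) _.
  rewrite rabsZ ?invr_ge0 ?ler0n // -(linZ T_lin) scalerA mulfK //.
  rewrite -[X in _ <=R _ + _ *: X]Te -(linZ T_lin) -(linD T_lin).
  exact: (posop_homo T_lin T_pos (dsq_ge_abs HD he K _)).
apply: rle_trans (rle_add _ (cond_exp_dsq_psum K n.+1)) _.
by rewrite -scalerDl; apply: rle_scalel.
Qed.

End MartingaleDifferences.

Theorem lemma4p1 (R : realType) (E : lmodType R) (L : riesz_space E)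
  (HD : dedekind_complete L)
  (T : E -> E) (HT : cond_exp L T)
  (e : E) (He : weak_order_unit L e) (HTe : T e = e)
  (Ti : nat -> E -> E) (HF : filtration L Ti) (Hcomp : compatible T Ti)
  (f : nat -> E) (Hadapt : forall i, range (Ti i) (f i))
  (B : R) (HB0 : 0 < B) (HB : forall i, rle L (rabs L (f i)) (B *: e)) :
  let g := fun i : nat => f i - Ti i.-1 (f i) in
  ((forall i, (0 < i)%N -> range (Ti i) (g i)) /\
   (forall i, Ti i (g i.+1) = 0)) /\
  seq_oconv L
    (fun n : nat => T (rabs L ((n.+1)%:R^-1 *: \sum_(1 <= i < n.+2) g i))) 0.
Proof.
move=> g; have he : rle L 0 e := He.1.
split; first by split; [exact: (mdiff_range HF Hadapt)|exact: (mdiff_cond0 HF)].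
have C_ge0 : 0 <= step_const (2 * B) by apply: sqr_ge0.
have avg_le := cond_exp_abs_avg_le HD HT he HTe HF Hcomp Hadapt HB.
apply: (seq_oconv0_eventually_small HD (c := step_const (2 * B) + 1) he).
- by move=> n; case: HT => _ T_pos _ _ _; apply/T_pos/rabs_ge0.
- move=> n; apply: (avg_le 1%N) => //.
  have : 1 <= n.+1%:R :> R by rewrite ler1n.
  by nra.
- move=> eps eps_gt0; have [K [n0 [K_gt0 hK]]] := quadratic_tradeoff C_ge0 eps_gt0.
  by exists n0 => n hn; apply: avg_le K_gt0 (hK n hn).
Qed.
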